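(* Let $n\ge1$, $d\ge1$ and let $U\subseteq\mathbb R^d$ be a finite set with $|U|\ge3$ contained in the closed unit ball, with a fixed enumeration $U=\{v_1,\dots,v_{|U|}\}$; let $P(U)$ be its power set. Then there exist sets $\Psi_1,\dots,\Psi_n\subseteq\mathbb R^{2n}$, a number $0<\epsilon<\frac1n$, and maps $\phi:P(U)\times[n]\to\mathbb R^{2n}$ and $\alpha:\mathbb R^{2n}\to U$ such that: (i) $\|\phi(V,j)\|\le 1$ for all $V\subseteq U$, $j\in[n]$; (ii) for every $k\in[n]$ and $\psi\in\Psi_k$, $\|\psi\|\le1$ and $\|\alpha(\psi)\|\le1$; (iii) for every $k\in[n]$ and all $V_1,\dots,V_k\subseteq U$, the vector $\psi_k^*=\frac1n\sum_{i=1}^k\phi(V_i,i)$ lies in $\Psi_k$ and satisfies: for every $\psi\in\Psi_k$ with $\psi\ne\psi_k^*$, $\big\langle\psi_k^*,\frac1n\sum_{i=1}^k\phi(V_i,i)\big\rangle\ge\big\langle\psi,\frac1n\sum_{i=1}^k\phi(V_i,i)\big\rangle+\epsilon$; and if $\bigcap_{i=1}^kV_i\ne\emptyset$ then $\alpha(\psi_k^* )=v_m$ where $m=\min\{i: v_i\in\bigcap_{l=1}^kV_l\}$.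
   Context: $[N]=\{1,\dots,N\}$; norms are Euclidean. *)

From HB Require Import structures.
From mathcomp Require Import all_boot all_order all_algebra.
From mathcomp Require Import reals.
Set Implicit Arguments. Unset Strict Implicit. Unset Printing Implicit Defensive.
Import Order.TTheory GRing.Theory Num.Theory.
Local Open Scope ring_scope.

Definition dotv (R : realType) (m : nat) (x y : 'rV[R]_m) : R :=
  \sum_(i < m) x 0 i * y 0 i.

Definition normv (R : realType) (m : nat) (x : 'rV[R]_m) : R :=
  Num.sqrt (dotv x x).

(* Number the M = 2^N subsets W of indices by t_W = (rank W + 1) / M in (0, 1], and
   let p_W = (t_W, sqrt (1 - t_W^2)), a unit vector of the plane.  View R^(2n) as n
   planar blocks: phi(W, j) is p_W placed in block j, so psi_k^* has p_(V_i) / n in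
   block i <= k and 0 elsewhere; Psi_k is the set of all such vectors.  They all have
   the same norm, so <psi*, psi*> - <psi, psi*> = |psi* - psi|^2 / 2, and at a block
   where psi and psi* differ the first coordinates alone contribute at least
   (t_W - t_W')^2 / n^2 >= 1 / (n M)^2.  Since t_W > 0, the first coordinate of each
   block decodes V_i (empty blocks decode nothing), so alpha intersects the decoded
   sets and returns the least index. *)

From HB Require Import structures.
From mathcomp Require Import all_boot all_order all_algebra.
From mathcomp Require Import reals.
From mathcomp Require Import ring lra zify.
Set Implicit Arguments. Unset Strict Implicit. Unset Printing Implicit Defensive.
Import Order.TTheory GRing.Theory Num.Theory.
Local Open Scope ring_scope.

Section DotProduct.
Variable R : realType.

Lemma dotv_mxvec m n (A B : 'M[R]_(m, n)) :
  dotv (mxvec A) (mxvec B) = \sum_i \sum_j A i j * B i j.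
Proof.
rewrite /dotv (reindex _ (curry_mxvec_bij _ _)) /= pair_bigA.
by apply: eq_bigr => -[i j] _; rewrite !mxvecE.
Qed.

Lemma sqr_le_dotv m (x : 'rV[R]_m) i : x 0 i ^+ 2 <= dotv x x.
Proof.
rewrite /dotv (bigD1 i) //= -expr2 lerDl.
by apply: sumr_ge0 => j _; rewrite -expr2 sqr_ge0.
Qed.

Lemma dotv_gap m (x y : 'rV[R]_m) :
  dotv x x = dotv y y -> dotv y y = dotv x y + dotv (y - x) (y - x) / 2.
Proof.
move=> xx_yy.
have -> : dotv (y - x) (y - x) = dotv y y + dotv x x - 2 * dotv x y.
  rewrite /dotv mulr_sumr -big_split -sumrB /=.
  by apply: eq_bigr => i _; rewrite !mxE; ring.
rewrite xx_yy; lra.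
Qed.

Lemma normv_le1 m (x : 'rV[R]_m) : dotv x x <= 1 -> normv x <= 1.
Proof. by move=> x_le1; rewrite /normv -(@sqrtr1 R) ler_wsqrtr. Qed.

End DotProduct.

Lemma mem_bigcap_nat1 (T : finType) (F : nat -> {set T}) k x :
  reflect (forall l : 'I_k, x \in F l.+1) (x \in \bigcap_(1 <= l < k.+1) F l).
Proof. by rewrite big_add1 /= big_mkord; apply: (iffP bigcapP) => [h l | h l _]; apply: h. Qed.

Definition least N (i0 : 'I_N) (D : {set 'I_N}) : 'I_N :=
  odflt i0 [pick i in D | [forall j in D, (i <= j)%N]].

Lemma least_eq N (i0 m : 'I_N) (D : {set 'I_N}) :
  m \in D -> (forall i, i \in D -> (m <= i)%N) -> least i0 D = m.
Proof.
move=> mD m_min; rewrite /least; case: pickP => [i /andP[iD /forall_inP i_min] | no_min].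
  by apply: val_inj; apply/eqP; rewrite eqn_leq m_min // i_min.
by have /negP[] := no_min m; rewrite mD; apply/forall_inP.
Qed.

Lemma sqr_natrB_ge1 (R : realDomainType) (a b : nat) : a != b -> 1 <= (a%:R - b%:R : R) ^+ 2.
Proof. by rewrite neq_ltn => /orP[]; rewrite -(ler_nat R) -natr1 => ?; nra. Qed.

Section CircleCode.
Variables (R : realType) (T : finType).

Definition rank_frac (x : T) : R := (enum_rank x).+1%:R / #|T|%:R.

Lemma card_gt0_of (x : T) : (0 < #|T|)%N.
Proof. by apply/card_gt0P; exists x. Qed.

Lemma rank_frac_gt0 x : 0 < rank_frac x.
Proof. by rewrite divr_gt0 ?ltr0n ?(card_gt0_of x). Qed.

Lemma rank_frac_le1 x : rank_frac x <= 1.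
Proof. by rewrite ler_pdivrMr ?ltr0n ?(card_gt0_of x) // mul1r ler_nat. Qed.

Lemma rank_frac_inj : injective rank_frac.
Proof.
move=> x y /(mulIf _); rewrite invr_eq0 pnatr_eq0 -lt0n (card_gt0_of x) => /(_ isT).
by move/eqP; rewrite eqr_nat eqSS => /eqP /val_inj /enum_rank_inj.
Qed.

Lemma rank_frac_sep x y : x != y -> (#|T| ^ 2)%:R^-1 <= (rank_frac x - rank_frac y) ^+ 2.
Proof.
move=> xy; rewrite /rank_frac -mulrBl exprMn exprVn -natrX -[X in X <= _]mul1r ler_wpM2r //.
  by rewrite invr_ge0 ler0n.
by apply: sqr_natrB_ge1; rewrite eqSS; apply: contra xy => /eqP /val_inj /enum_rank_inj ->.
Qed.

Definition quarter_pt (t : R) (r : 'I_2) : R := if r == 0 then t else Num.sqrt (1 - t ^+ 2).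

Lemma sum_quarter_pt_sqr t : 0 <= t <= 1 -> \sum_r quarter_pt t r ^+ 2 = 1.
Proof.
move=> /andP[t_ge0 t_le1]; rewrite big_ord_recl big_ord1 /quarter_pt /= sqr_sqrtr; first lra.
by rewrite subr_ge0 expr_le1.
Qed.

Variable n : nat.

Definition code_mx (a : R) (sel : pred 'I_n) (F : 'I_n -> T) : 'M[R]_(2, n) :=
  \matrix_(r, c) if sel c then a * quarter_pt (rank_frac (F c)) r else 0.

Lemma dotv_code_mx a sel F :
  dotv (mxvec (code_mx a sel F)) (mxvec (code_mx a sel F)) = a ^+ 2 * #|sel|%:R.
Proof.
rewrite dotv_mxvec exchange_big /= (eq_bigr (fun c => if sel c then a ^+ 2 else 0)).
  by rewrite -big_mkcond sumr_const mulr_natr.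
move=> c _; under eq_bigr do rewrite !mxE.
case: (sel c); last by rewrite big1 // => r _; rewrite mul0r.
rewrite -[RHS]mulr1 -(@sum_quarter_pt_sqr (rank_frac (F c))).
  by rewrite mulr_sumr; apply: eq_bigr => r _; rewrite mulrACA -!expr2.
by rewrite rank_frac_le1 ltW ?rank_frac_gt0.
Qed.

Lemma code_mx_sep a sel F G : code_mx a sel G != code_mx a sel F ->
  dotv (mxvec (code_mx a sel G)) (mxvec (code_mx a sel F)) + a ^+ 2 / (2 * #|T| ^ 2)%:R
  <= dotv (mxvec (code_mx a sel F)) (mxvec (code_mx a sel F)).
Proof.
move=> GF.
have [c sel_c FGc] : exists2 c, sel c & F c != G c.
  case: (boolP [exists c, sel c && (F c != G c)]) => [/existsP[c /andP[]] | /existsPn same].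
    by exists c.
  case/eqP: GF; apply/matrixP => r c; rewrite !mxE.
  by case: (sel c) (same c) => //= /negPn /eqP ->.
rewrite (@dotv_gap _ _ (mxvec (code_mx a sel G))) ?dotv_code_mx // lerD2l.
set d := mxvec _ - mxvec _.
apply: le_trans (_ : d 0 (mxvec_index 0 c) ^+ 2 / 2 <= _); last first.
  by rewrite ler_wpM2r ?invr_ge0 ?ler0n ?sqr_le_dotv.
rewrite !mxE !mxvecE !mxE sel_c /quarter_pt /= -mulrBr exprMn natrM invfM.
rewrite [2%:R^-1 * _]mulrC mulrA ler_wpM2r ?invr_ge0 ?ler0n //.
by rewrite ler_wpM2l ?sqr_ge0 ?rank_frac_sep.
Qed.

Definition coded_in (a : R) (A : 'M[R]_(2, n)) (c : 'I_n) (x : T) : bool :=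
  A 0 c == a * rank_frac x.

Lemma coded_in_code_mx a sel F c x : a != 0 ->
  coded_in a (code_mx a sel F) c x = sel c && (F c == x).
Proof.
move=> a_neq0; rewrite /coded_in mxE /quarter_pt /=; case: (sel c) => /=.
  by rewrite (inj_eq (mulfI a_neq0)) (inj_eq rank_frac_inj).
by rewrite eq_sym mulf_eq0 (negbTE a_neq0) gt_eqF ?rank_frac_gt0.
Qed.

End CircleCode.

Section Encoding.
Variables (R : realType) (T : finType) (n : nat).

Definition block_vec (x : T) (j : nat) : 'rV[R]_(2 * n) :=
  mxvec (code_mx 1 (fun c : 'I_n => c == j.-1 :> nat) (fun=> x)).

Definition prefix_mx (k : nat) (F : nat -> T) : 'M[R]_(2, n) :=
  code_mx n%:R^-1 (fun c : 'I_n => (c < k)%N) (fun c => F c.+1).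

Lemma sum_block_vec k F :
  n%:R^-1 *: \sum_(1 <= i < k.+1) block_vec (F i) i = mxvec (prefix_mx k F).
Proof.
rewrite -linear_sum -linearZ; congr mxvec; apply/matrixP => r c.
rewrite !mxE summxE big_add1 /=; under eq_bigr do rewrite mxE mul1r eq_sym.
by rewrite -big_mkcond big_nat1_eq /=; case: ifP; rewrite ?mulr0.
Qed.

Lemma block_vec_norm x j : normv (block_vec x j) <= 1.
Proof.
apply: normv_le1; rewrite dotv_code_mx expr1n mul1r lern1.
by apply/card_le1_eqP => c c' /eqP c_j /eqP c'_j; apply: val_inj; rewrite /= c_j.
Qed.

Lemma prefix_mx_norm k F : (0 < n)%N -> normv (mxvec (prefix_mx k F)) <= 1.
Proof.
move=> n_gt0; apply: normv_le1; rewrite dotv_code_mx.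
have card_le_n : #|[pred c : 'I_n | (c < k)%N]|%:R <= n%:R :> R.
  by rewrite ler_nat (leq_trans (max_card _)) ?card_ord.
apply: le_trans (ler_wpM2l (exprn_ge0 _ _) card_le_n) _; first by rewrite invr_ge0.
by rewrite expr2 -mulrA mulVf ?pnatr_eq0 -?lt0n // mulr1 invf_le1 ?ler1n ?ltr0n.
Qed.

End Encoding.

Section Decoding.
Variables (R : realType) (n : nat).

Definition common_elts {X : finType} (a : R) (psi : 'rV[R]_(2 * n)) : {set X} :=
  [set i : X | [forall c, forall W : {set X}, coded_in a (vec_mx psi) c W ==> (i \in W)]].

Lemma common_elts_prefix (X : finType) k (V : nat -> {set X}) : (0 < n)%N -> (k <= n)%N ->
  common_elts n%:R^-1 (mxvec (prefix_mx R n k V)) = \bigcap_(1 <= l < k.+1) V l.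
Proof.
move=> n_gt0 k_le_n; have ninv_neq0 : n%:R^-1 != 0 :> R by rewrite invr_neq0 ?pnatr_eq0 -?lt0n.
apply/setP => i; rewrite inE mxvecK.
apply/forallP/mem_bigcap_nat1 => [in_coded l | in_V c].
  have l_lt_n : (l < n)%N by apply: leq_trans k_le_n.
  move/forallP/(_ (V l.+1)): (in_coded (Ordinal l_lt_n)).
  by rewrite coded_in_code_mx //= ltn_ord eqxx.
apply/forallP => W; apply/implyP.
by rewrite coded_in_code_mx // => /andP[c_lt_k /eqP <-]; apply: (in_V (Ordinal c_lt_k)).
Qed.

End Decoding.

Lemma sep_eps_bounds (R : realType) (n M : nat) : (0 < n)%N -> (0 < M)%N ->
  let eps : R := n%:R^-1 ^+ 2 / (2 * M ^ 2)%:R in 0 < eps /\ eps < 1 / n%:R.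
Proof.
move=> n_gt0 M_gt0 /=; rewrite exprVn -natrX -invfM -natrM div1r invr_gt0 ltr0n.
rewrite ltf_pV2 ?posrE ?ltr0n ?ltr_nat; nia.
Qed.

Theorem mainTheorem5 (R : realType) (n d N : nat) (v : 'I_N -> 'rV[R]_d) :
  (1 <= n)%N -> (1 <= d)%N -> (3 <= N)%N -> injective v ->
  (forall i, normv (v i) <= 1) ->
  exists (Psi : nat -> 'rV[R]_(2 * n) -> Prop) (eps : R)
         (phi : {set 'I_N} -> nat -> 'rV[R]_(2 * n))
         (alpha : 'rV[R]_(2 * n) -> 'I_N),
    [/\ 0 < eps, eps < 1 / n%:R,
     (forall (V : {set 'I_N}) (j : nat), (1 <= j <= n)%N -> normv (phi V j) <= 1),
     (forall (k : nat) (psi : 'rV[R]_(2 * n)), (1 <= k <= n)%N -> Psi k psi ->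
        normv psi <= 1 /\ normv (v (alpha psi)) <= 1) &
     (forall (k : nat) (V : nat -> {set 'I_N}), (1 <= k <= n)%N ->
        let S := n%:R^-1 *: \sum_(1 <= i < k.+1) phi (V i) i in
        let psistar := S in
        [/\ Psi k psistar,
         (forall psi, Psi k psi -> psi <> psistar ->
            dotv psistar S >= dotv psi S + eps) &
         (forall m : 'I_N, m \in \bigcap_(1 <= l < k.+1) V l ->
            (forall i : 'I_N, i \in \bigcap_(1 <= l < k.+1) V l -> (m <= i)%N) ->
            v (alpha psistar) = v m)])].
Proof.
(* [alpha] computes the least index itself, so injectivity of [v] is not needed. *)
move=> n_gt0 _ N_ge3 _ v_le1.
have i0 : 'I_N := Ordinal (leq_trans (isT : 0 < 3)%N N_ge3).
have [eps_gt0 eps_lt] := sep_eps_bounds R n_gt0 (card_gt0_of (set0 : {set 'I_N})).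
exists (fun k psi => exists V : nat -> {set 'I_N}, psi = mxvec (prefix_mx R n k V)),
  (n%:R^-1 ^+ 2 / (2 * #|{set 'I_N}| ^ 2)%:R), (block_vec R n),
  (fun psi => least i0 (common_elts n%:R^-1 psi)).
split => // [V j _ | k psi _ [V ->] | k V /andP[_ k_le_n] /=].
- exact: block_vec_norm.
- by split; [apply: prefix_mx_norm | apply: v_le1].
rewrite sum_block_vec; split; first by exists V.
  move=> _ [V' ->] neq_V'V; apply: code_mx_sep.
  by apply/eqP => eq_V'V; apply: neq_V'V; rewrite /prefix_mx eq_V'V.
by move=> m m_in m_min; congr v; apply: least_eq; rewrite common_elts_prefix.
Qed.
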